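(* None of the following classes of topological spaces is $\omega$-projective: compact locally compact spaces; compact locally compact sober spaces; stably compact spaces.
   Context: A projective system of topological spaces consists of a directed preordered set $(I,\sqsubseteq)$, spaces $X_i$ and continuous maps $p_{ij}\colon X_j\to X_i$ for $i\sqsubseteq j$ with $p_{ii}=\mathrm{id}$ and $p_{ij}\circ p_{jk}=p_{ik}$; its projective limit is its limit in the category of topological spaces. A class is $\omega$-projective if it is closed under projective limits of systems whose index set has a countable cofinal subset. Compactness assumes no separation axiom. A space is locally compact if for every point $x$ and open neighbourhood $U$ of $x$ there is a compact saturated set $Q$ with $x\in\mathrm{int}(Q)\subseteq Q\subseteq U$ (saturated = upward closed in the specialization preorder). Sober: $T_0$ and every irreducible closed set is the closure of a point. Coherent: the intersection of any two compact saturated subsets is compact. Stably compact: sober, locally compact, coherent and compact. *)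

From HB Require Import structures.
From mathcomp Require Import all_boot all_order all_algebra.
From mathcomp Require Import all_classical all_reals.
From mathcomp Require Import topology.

Unset Printing Implicit Defensive.

Local Open Scope classical_set_scope.

Record proj_system := ProjSystem {
  ps_I : Type;
  ps_le : ps_I -> ps_I -> Prop;
  ps_refl : forall i, ps_le i i;
  ps_trans : forall i j k, ps_le i j -> ps_le j k -> ps_le i k;
  ps_nonempty : exists i : ps_I, True;
  ps_directed : forall i j, exists k, ps_le i k /\ ps_le j k;
  ps_X : ps_I -> topologicalType;
  ps_p : forall i j, ps_le i j -> ps_X j -> ps_X i;
  ps_p_cont : forall i j (h : ps_le i j), continuous (ps_p i j h);
  ps_p_id : forall i (h : ps_le i i) (x : ps_X i), ps_p i i h x = x;
  ps_p_comp : forall i j k (hij : ps_le i j) (hjk : ps_le j k)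
      (hik : ps_le i k) (x : ps_X k),
    ps_p i j hij (ps_p j k hjk x) = ps_p i k hik x
}.

Definition countably_cofinal (S : proj_system) : Prop :=
  exists C : set (@ps_I S), countable C /\
    forall i, exists c, C c /\ ps_le S i c.

Definition plim_set (S : proj_system) : set (prod_topology (@ps_X S)) :=
  [set x | forall i j (h : @ps_le S i j), @ps_p S i j h (x j) = x i].

Definition plim (S : proj_system) : topologicalType :=
  set_type (plim_set S).

Definition omega_projective (P : topologicalType -> Prop) : Prop :=
  forall S : proj_system, countably_cofinal S ->
    (forall i, P (@ps_X S i)) -> P (plim S).

Section Notions.
Context {T : topologicalType}.

Definition spec_le (x y : T) : Prop := closure [set y] x.

Definition saturated (Q : set T) : Prop :=
  forall x y, Q x -> spec_le x y -> Q y.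

End Notions.

Definition compact_space (T : topologicalType) : Prop := compact [set: T].

Definition locally_compact_space (T : topologicalType) : Prop :=
  forall (x : T) (U : set T), open U -> U x ->
    exists Q : set T, compact Q /\ saturated Q /\ interior Q x /\ Q `<=` U.

Definition irreducible_closed (T : topologicalType) (F : set T) : Prop :=
  closed F /\ F !=set0 /\
  forall A B : set T, closed A -> closed B -> F `<=` A `|` B ->
    F `<=` A \/ F `<=` B.

Definition sober_space (T : topologicalType) : Prop :=
  kolmogorov_space T /\
  forall F : set T, irreducible_closed T F -> exists x : T, F = closure [set x].

Definition coherent_space (T : topologicalType) : Prop :=
  forall Q1 Q2 : set T, compact Q1 -> saturated Q1 -> compact Q2 -> saturated Q2 ->
    compact (Q1 `&` Q2).

Definition stably_compact (T : topologicalType) : Prop :=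
  sober_space T /\ locally_compact_space T /\ coherent_space T /\ compact_space T.

From HB Require Import structures.
From mathcomp Require Import all_boot all_order all_algebra.
From mathcomp Require Import all_classical all_reals.
From mathcomp Require Import topology.
Local Open Scope classical_set_scope.

(* Each [X n] is the upper-set topology of a poset of height two: a bottom
   [Bot], a point [Inf] below the points [Apt k] with [n <= k], and the maximal
   points [Apt k] and [Bpt k j]; such spaces are stably compact.  The bonding
   maps send [Bpt k j] to [Apt k] at every stage [i <= j].  In the limit, every
   neighbourhood of the thread of [Inf] contains the threads [b_thread k j] for
   all large [k] and [j], but for fixed [j] the threads [(b_thread k j)_k] have
   no cluster point with a non-bottom coordinate, because at stage [j.+1] they
   are pairwise distinct maximal points.  So the thread of [Inf] has no compact
   neighbourhood inside the open set of threads whose coordinate 0 is not the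
   bottom. *)

Definition upper_set {T : Type} (le : T -> T -> Prop) (A : set T) :=
  forall x y, A x -> le x y -> A y.

Definition directed {T : Type} (le : T -> T -> Prop) (A : set T) :=
  forall x y, A x -> A y -> exists z, [/\ A z, le x z & le y z].

Definition alexandrov {T : choiceType} (le : T -> T -> Prop) : Type := T.

Section AlexandrovTopology.
Context {T : choiceType} (le : T -> T -> Prop).

Lemma upper_setT : upper_set le setT. Proof. by []. Qed.

Lemma upper_setI : setI_closed (upper_set le).
Proof.
by move=> A B uA uB x y [Ax Bx] lexy; split; [exact: uA lexy|exact: uB lexy].
Qed.

Lemma upper_set_bigcup (I : Type) (f : I -> set T) :
  (forall i, upper_set le (f i)) -> upper_set le (\bigcup_i f i).
Proof. by move=> uf x y [i _ fi] lexy; exists i => //; exact: uf lexy. Qed.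

HB.instance Definition _ := Choice.on (alexandrov le).
HB.instance Definition _ := isOpenTopological.Build (alexandrov le)
  upper_setT upper_setI upper_set_bigcup.

End AlexandrovTopology.

Section Alexandrov.
Context {T : choiceType} (le : T -> T -> Prop).
Hypothesis le_refl : forall x, le x x.
Hypothesis le_trans : forall x y z, le x y -> le y z -> le x z.

Local Notation X := (alexandrov le).

Lemma alexandrov_openE (A : set X) : open A = upper_set le A.
Proof. by []. Qed.

Lemma open_up (x : X) : open (le x : set X).
Proof. by move=> y z; exact: le_trans. Qed.

Lemma alexandrov_nbhsP (x : X) (A : set X) : nbhs x A <-> le x `<=` A.
Proof.
rewrite nbhsE; split=> [[B [oB Bx] BA] y lexy|upA]; first exact/BA/(oB _ _ Bx).
by exists (le x) => //; split; [exact: open_up|exact: le_refl].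
Qed.

Lemma alexandrov_closureP (A : set X) (x : X) :
  closure A x <-> exists2 y, le x y & A y.
Proof.
split=> [/(_ (le x))[]|[y lexy Ay] B /alexandrov_nbhsP upB].
- exact/alexandrov_nbhsP.
- by move=> y [Ay lexy]; exists y.
- by exists y; split => //; exact: upB.
Qed.

Lemma alexandrov_spec_leP (x y : X) : spec_le x y <-> le x y.
Proof.
rewrite /spec_le alexandrov_closureP.
by split=> [[z lexz <-]|lexy]; last exists y.
Qed.

Lemma alexandrov_closedP (A : set X) :
  closed A <-> forall x y, le x y -> A y -> A x.
Proof.
split=> [cA x y lexy Ay|downA x /alexandrov_closureP[y lexy Ay]].
  by apply: cA; apply/alexandrov_closureP; exists y.
exact: downA lexy Ay.
Qed.

Lemma compact_up (x : X) : compact (le x : set X).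
Proof.
move=> F FF Fup; exists x; split; first exact: le_refl.
move=> A B FA /alexandrov_nbhsP upB.
have [y [Ay lexy]] := filter_ex (filterI FA Fup).
by exists y; split => //; exact: upB.
Qed.

Lemma alexandrov_compact_space (b : X) : (forall x, le b x) -> compact_space X.
Proof.
move=> leb; rewrite /compact_space.
have -> : [set: X] = le b by apply/seteqP; split=> // x _; exact: leb.
exact: compact_up.
Qed.

Lemma alexandrov_locally_compact : locally_compact_space X.
Proof.
move=> x U oU Ux; exists (le x); split; first exact: compact_up.
split; first by move=> y z lexy /alexandrov_spec_leP; exact: le_trans.
by split; [exact/alexandrov_nbhsP|move=> y; exact: oU].
Qed.

Lemma alexandrov_coherent :
  (forall x y z, le x z -> le y z -> le x y \/ le y x) -> coherent_space X.
Proof.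
move=> comparable Q1 Q2 cQ1 sQ1 cQ2 sQ2; rewrite compact_ultra => F UF FQ.
have limit_in Q : compact Q -> F Q -> exists y, Q y /\ F --> y.
  by rewrite compact_ultra => /(_ F UF) cQ /cQ[y]; exists y.
have [y1 [Q1y1 Fy1]] := limit_in _ cQ1 (filterS (@subIsetl _ _ _) FQ).
have [y2 [Q2y2 Fy2]] := limit_in _ cQ2 (filterS (@subIsetr _ _ _) FQ).
have Fup (y : X) : F --> y -> F (le y).
  by move=> Fy; apply: Fy; exact/alexandrov_nbhsP.
have [z [le1z le2z]] := filter_ex (filterI (Fup _ Fy1) (Fup _ Fy2)).
have [le12|le21] := comparable _ _ _ le1z le2z.
- by exists y2; split=> //; split=> //; apply: sQ1 Q1y1 _; exact/alexandrov_spec_leP.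
- by exists y1; split=> //; split=> //; apply: sQ2 Q2y2 _; exact/alexandrov_spec_leP.
Qed.

Lemma irreducible_closed_directed (F : set X) :
  irreducible_closed X F -> directed le F.
Proof.
move=> [cF [_ irrF]] x y Fx Fy; apply: contrapT => noub.
have cFx w : closed (F `&` ~` le w).
  exact: closedI cF (open_closedC (open_up w)).
have [] := irrF _ _ (cFx x) (cFx y).
- move=> w Fw; have [lexw|] := pselect (le x w); last by left.
  by right; split=> // leyw; apply: noub; exists w.
- by move=> /(_ x Fx)[_]; apply; exact: le_refl.
- by move=> /(_ y Fy)[_]; apply; exact: le_refl.
Qed.

Lemma alexandrov_sober :
  (forall x y, le x y -> le y x -> x = y) ->
  (forall A : set X, A !=set0 -> directed le A ->
     exists2 m, A m & forall x, A x -> le x m) ->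
  sober_space X.
Proof.
move=> le_anti greatest; split=> [x y /eqP neqxy|F irrF].
  have [lexy|nlexy] := pselect (le x y); last first.
    by exists (le x); left; split; apply/mem_set => //; exact/alexandrov_nbhsP.
  have [leyx|nleyx] := pselect (le y x); first by case: neqxy; exact: le_anti.
  by exists (le y); right; split; apply/mem_set => //; exact/alexandrov_nbhsP.
have [cF [F0 _]] := irrF.
have [m Fm lem] := greatest F F0 (irreducible_closed_directed _ irrF).
exists m; apply/seteqP; split=> x.
  by move=> Fx; apply/alexandrov_closureP; exists m => //; exact: lem.
move=> /alexandrov_closureP[y lexy ym]; move: lexy; rewrite ym => lexm.
exact: (iffLR (alexandrov_closedP F) cF) lexm Fm.
Qed.

Lemma monotone_continuous {U : choiceType} (leU : U -> U -> Prop)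
    (f : X -> alexandrov leU) :
  (forall x y, le x y -> leU (f x) (f y)) -> continuous f.
Proof.
move=> monof; apply/continuousP => A oA.
rewrite alexandrov_openE => x y fxA /monof.
exact: (oA : upper_set leU A) _ _ fxA.
Qed.

End Alexandrov.

Section ProjectiveLimit.
Variable S : proj_system.

Definition coord (i : ps_I S) (x : plim S) : ps_X S i :=
  (set_val x : prod_topology (@ps_X S)) i.

Lemma bond_coord i j (h : ps_le S i j) (x : plim S) :
  ps_p S i j h (coord j x) = coord i x.
Proof. exact: set_mem (valP x) i j h. Qed.

Lemma coord_continuous i : continuous (coord i).
Proof.
(* The library's [proj_continuous] needs an [eqType] of indices. *)
have eval_continuous : continuous (fun f : prod_topology (@ps_X S) => f i).
  move=> f; have /cvg_sup/(_ i) cvg_f : f --> f by exact: cvg_id.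
  exact: cvg_trans (cvg_app _ cvg_f) (@initial_continuous _ _ (proj i) f).
move=> x; apply: (@continuous_comp (plim S) (prod_topology (@ps_X S)) (ps_X S i)
  set_val (fun f => f i)).
  exact: initial_continuous.
exact: eval_continuous.
Qed.

Lemma plim_cvg (F : set_system (plim S)) {FF : Filter F} (x : plim S) :
  (forall i, coord i @ F --> coord i x) -> F --> x.
Proof.
move=> cvg_coord Q [_ [[V oV <-] Vx] VQ]; apply: filterS VQ _.
suff : set_val @ F --> (set_val x : prod_topology (@ps_X S)).
  by apply; apply: open_nbhs_nbhs.
apply/cvg_sup => i W [_ [[Wi oWi <-] Wix] WiW].
have FWi : (coord i @ F) Wi.
  by apply: (cvg_coord i Wi); rewrite nbhsE; exists Wi.
by apply: (@filterS _ F FF _ _ _ FWi) => y /WiW.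
Qed.

End ProjectiveLimit.

Inductive point := Bot | Inf | Apt of nat | Bpt of nat & nat.

HB.instance Definition _ := gen_eqMixin point.
HB.instance Definition _ := gen_choiceMixin point.

Definition point_le (n : nat) (x y : point) : Prop :=
  match x, y with
  | Bot, _ => True
  | Inf, Inf => True
  | Inf, Apt k => (n <= k)%N
  | Apt k, Apt k' => k = k'
  | Bpt k j, Bpt k' j' => k = k' /\ j = j'
  | _, _ => False
  end.

Section PointOrder.
Variable n : nat.
Local Notation le := (point_le n).

Lemma point_le_refl x : le x x.
Proof. by case: x. Qed.

Lemma point_le_trans x y z : le x y -> le y z -> le x z.
Proof. by case: x; case: y => //; case: z => //= *; intuition; subst. Qed.

Lemma point_le_anti x y : le x y -> le y x -> x = y.
Proof. by case: x; case: y => //= *; intuition; subst. Qed.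

Lemma point_le_comparable x y z : le x z -> le y z -> le x y \/ le y x.
Proof.
by case: x; case: y => //; try by [left|right]; case: z => //= *; intuition; subst; auto.
Qed.

Lemma point_directed_greatest (A : set point) : A !=set0 -> directed le A ->
  exists2 m, A m & forall x, A x -> le x m.
Proof.
move=> [x0 Ax0] dirA.
have greatest_maximal m : A m -> (forall z, le m z -> z = m) ->
    exists2 m, A m & forall x, A x -> le x m.
  move=> Am maxm; exists m => // x Ax.
  by have [z [_ lexz /maxm zm]] := dirA _ _ Ax Am; rewrite -zm.
have [[k Ak]|noA] := pselect (exists k, A (Apt k)).
  by apply: greatest_maximal Ak _; case=> //= ? ->.
have [[k [j Akj]]|noB] := pselect (exists k j, A (Bpt k j)).
  by apply: greatest_maximal Akj _; case=> // ? ? /= [-> ->].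
have low x : A x -> x = Bot \/ x = Inf.
  case: x => [||k Ak|k j Akj]; [by left|by right|..].
  - by case: noA; exists k.
  - by case: noB; exists k, j.
have [AInf|noInf] := pselect (A Inf).
  by exists Inf => // x /low[]->.
have lowBot x : A x -> x = Bot.
  by move=> Ax; have [|xInf] := low _ Ax; last by rewrite xInf in Ax.
by exists Bot => [|x /lowBot ->]; first by rewrite -(lowBot _ Ax0).
Qed.

End PointOrder.

Local Notation X n := (alexandrov (point_le n)).

Lemma stably_compact_X n : stably_compact (X n).
Proof.
have refl := point_le_refl n; have trans := @point_le_trans n.
split; last split; last split.
- exact: alexandrov_sober (@point_le_anti n) (@point_directed_greatest n).
- exact: alexandrov_locally_compact.
- exact: alexandrov_coherent (@point_le_comparable n).
- exact: (@alexandrov_compact_space _ (point_le n) refl trans Bot).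
Qed.

Lemma X_nbhsP n (x : X n) (A : set (X n)) : nbhs x A <-> point_le n x `<=` A.
Proof. exact: (@alexandrov_nbhsP _ _ (@point_le_refl n) (@point_le_trans n)). Qed.

Definition collapse (i : nat) (x : point) : point :=
  if x is Bpt k j then (if (j < i)%N then x else Apt k) else x.

Definition bond (i j : nat) (x : point) : point :=
  if i == j then x else collapse i x.

Lemma collapse_collapse {i j} x :
  (i <= j)%N -> collapse i (collapse j x) = collapse i x.
Proof.
move=> leij; case: x => //= k l.
by case: ltnP => //= lejl; rewrite ltnNge (leq_trans leij lejl).
Qed.

Lemma bond_id i x : bond i i x = x.
Proof. by rewrite /bond eqxx. Qed.

Lemma bond_comp {i j k} x : (i <= j)%N -> (j <= k)%N ->
  bond i j (bond j k x) = bond i k x.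
Proof.
rewrite /bond => leij lejk.
have [<-|neij] := eqVneq i j; first by [].
have [<-|nejk] := eqVneq j k; first by rewrite (negbTE neij).
have -> : (i == k) = false.
  by apply/eqP => eik; move: neij; rewrite eqn_leq leij eik lejk.
exact: collapse_collapse.
Qed.

Lemma bond_monotone i j x y : (i <= j)%N ->
  point_le j x y -> point_le i (bond i j x) (bond i j y).
Proof.
rewrite /bond => leij; case: eqP => [<-|/eqP neij] //.
case: x => [||k|k l]; case: y => [||k'|k' l'] //=.
- exact: leq_trans leij.
- by move=> [-> ->]; exact: point_le_refl.
Qed.

Lemma bond_continuous i j : (i <= j)%N -> continuous (bond i j : X j -> X i).
Proof. by move=> leij; apply: monotone_continuous => x y; exact: bond_monotone. Qed.

Lemma leq_upper_bound (i j : nat) : exists k, (i <= k)%N /\ (j <= k)%N.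
Proof. by exists (maxn i j); rewrite leq_maxl leq_maxr. Qed.

Definition system : proj_system := {|
  ps_I := nat;
  ps_le := fun i j => (i <= j)%N;
  ps_refl := leqnn;
  ps_trans := fun i j k lij ljk => leq_trans lij ljk;
  ps_nonempty := ex_intro _ 0%N I;
  ps_directed := leq_upper_bound;
  ps_X := fun n => X n;
  ps_p := fun i j _ => bond i j;
  ps_p_cont := @bond_continuous;
  ps_p_id := fun i _ => bond_id i;
  ps_p_comp := fun i j k lij ljk _ x => bond_comp x lij ljk |}.

Lemma countably_cofinal_system : countably_cofinal system.
Proof.
by exists [set: nat]; split=> [|i]; [exact: countableP|exists i; split=> //=].
Qed.

Lemma inf_thread_compatible : (fun n => Inf : X n) \in plim_set system.
Proof. by apply/mem_set => i j _ /=; rewrite /bond; case: eqP. Qed.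

Definition inf_thread : plim system :=
  exist _ (fun n => Inf : X n) inf_thread_compatible.

Lemma b_thread_compatible k j :
  (fun n => collapse n (Bpt k j) : X n) \in plim_set system.
Proof.
apply/mem_set => i l leil /=; rewrite /bond; case: eqP => [->|_] //.
exact: (collapse_collapse (Bpt k j) leil).
Qed.

Definition b_thread k j : plim system :=
  exist _ (fun n => collapse n (Bpt k j) : X n) (b_thread_compatible k j).

Lemma coord_b_thread n k j :
  coord system n (b_thread k j) = collapse n (Bpt k j).
Proof. by []. Qed.

Lemma b_threads_cvg :
  (fun jk => b_thread jk.2 jk.1) @ filter_prod \oo \oo --> inf_thread.
Proof.
apply: plim_cvg => i A /X_nbhsP upA.
  exists ([set j | (i <= j)%N], [set k | (i <= k)%N]) => [|[j k] [/= leij leik]].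
  by split; exists i.
by apply: upA; rewrite coord_b_thread /= ltnNge leij.
Qed.

Lemma b_row_in_nbhs {Q : set (plim system)} :
  nbhs inf_thread Q -> exists j, \forall k \near \oo, Q (b_thread k j).
Proof.
move=> /b_threads_cvg Q_near.
have /nearP_dep/filter_ex[j] : \forall j \near \oo & k \near \oo, Q (b_thread k j).
  exact: Q_near.
by exists j.
Qed.

Lemma not_below_Bpt_eventually n j (c : point) : c <> Bot ->
  \forall k \near \oo, ~ point_le n c (Bpt k j).
Proof.
case: c => [//||k0|k0 j0] _; try by exists 0%N => // k _ [].
by exists k0.+1 => // k /= ltk0k [k0k _]; move: ltk0k; rewrite k0k ltnn.
Qed.

Lemma b_row_no_cluster j (y : plim system) :
  coord system 0 y <> Bot -> ~ cluster ((fun k => b_thread k j) @ \oo) y.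
Proof.
move=> y0 cly; set c := coord system j.+1 y.
have cBot : c <> Bot.
  by move=> cB; apply: y0; rewrite -(bond_coord system 0 j.+1 isT) -/c cB.
have near_y : nbhs y (coord system j.+1 @^-1` point_le j.+1 c).
  by apply: coord_continuous; apply/X_nbhsP.
have far :
    \forall k \near \oo, ~ point_le j.+1 c (coord system j.+1 (b_thread k j)).
  apply: filterS (not_below_Bpt_eventually j.+1 j c cBot) => k.
  by rewrite coord_b_thread /= ltnSn.
by have [z [far_z near_z]] :=
  cly [set z | ~ point_le j.+1 c (coord system j.+1 z)] _ far near_y.
Qed.

Lemma plim_not_locally_compact : ~ locally_compact_space (plim system).
Proof.
move=> lc.
have oU : open (coord system 0 @^-1` [set w | w <> Bot]).
  apply: (iffLR (continuousP _) (coord_continuous system 0%N)).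
  by move=> x y nx lexy yB; apply: nx; move: lexy; rewrite yB; case: x.
have U_inf : (coord system 0 @^-1` [set w | w <> Bot]) inf_thread by [].
have [Q [cQ [_ [nQ QU]]]] := lc inf_thread _ oU U_inf.
have [j Q_row] := b_row_in_nbhs nQ.
have [y [Qy cly]] := cQ ((fun k => b_thread k j) @ \oo) _ Q_row.
exact: b_row_no_cluster (QU _ Qy) cly.
Qed.

Theorem corollary3p7 :
  ~ omega_projective (fun T => compact_space T /\ locally_compact_space T) /\
  ~ omega_projective (fun T => compact_space T /\ locally_compact_space T /\
                               sober_space T) /\
  ~ omega_projective stably_compact.
Proof.
have not_omega_projective (P : topologicalType -> Prop) :
    (forall n, P (X n)) -> (forall T, P T -> locally_compact_space T) ->
    ~ omega_projective P.
  move=> PX P_lc P_proj; apply: plim_not_locally_compact; apply: P_lc.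
  exact: P_proj countably_cofinal_system PX.
split; [|split]; apply: not_omega_projective.
- by move=> n; have [_ [? [_ ?]]] := stably_compact_X n.
- by move=> T [].
- by move=> n; have [? [? [_ ?]]] := stably_compact_X n.
- by move=> T [_ []].
- exact: stably_compact_X.
- by move=> T [_ []].
Qed.
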